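(* Let $k\in\mathbb{N}$, $p_k=3k-1$, $A_k=\{k,2k-1\}$ and $\mathcal{M}_k=\{ip_k+j:\ i\in\mathbb{N}_0,\ k\le j\le 2k-1\}$. For a game $X\subseteq\mathbb{N}_0$, one has $P(X)=\mathcal{M}_k$ if and only if $A_k\subseteq X\subseteq\mathcal{M}_k$.
   Context: A one-heap game is a set $X\subseteq\mathbb{N}_0$ of moves; from position $x\in\mathbb{N}_0$ one may move to $y\in\mathbb{N}_0$ iff $x-y\in X$. Misère play: a player who cannot move wins. If $0\in X$, $P(X)=\varnothing$. Otherwise: a position is an N-position if it has no option or some option is a P-position; otherwise it is a P-position; $P(X)$ denotes the set of P-positions. *)

From mathcomp Require Import all_boot.
Set Implicit Arguments. Unset Strict Implicit. Unset Printing Implicit Defensive.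

(* A one-heap game is a set X ⊆ ℕ₀ of moves, given as a predicate.  For 0 ∉ X every move strictly
   decreases the heap, so the P/N labelling is defined by strong recursion.
   [Paux X fuel x] computes "x is a P-position" (misère: no option => N),
   correct whenever fuel > x. *)
Fixpoint Paux (X : nat -> Prop) (fuel x : nat) : Prop :=
  match fuel with
  | 0 => False
  | f.+1 =>
      (exists m, [/\ 1 <= m, m <= x & X m]) /\
      (forall m, 1 <= m -> m <= x -> X m -> ~ Paux X f (x - m))
  end.

Definition isP (X : nat -> Prop) (x : nat) : Prop := ~ X 0 /\ Paux X x.+1 x.

Definition Mk (k x : nat) : Prop :=
  exists i j, [/\ k <= j, j <= 2 * k - 1 & x = i * (3 * k - 1) + j].

From mathcomp Require Import all_boot zify.
From Stdlib Require Import Classical.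

Set Implicit Arguments. Unset Strict Implicit. Unset Printing Implicit Defensive.

(* Writing p = 3k-1, M_k is the set of heaps whose residue mod p lies in
   [k, 2k-1].  Two residues in [k, 2k-1] sum to something in [2k, 4k-2], which
   mod p avoids [k, 2k-1]: so no move of M_k leads from M_k into M_k.  From a
   heap outside M_k of size >= k, subtracting k (residue >= 2k) or 2k-1
   (residue < k, borrowing one p) lands in M_k.  Hence M_k satisfies the
   recursion that uniquely determines P(X) whenever k, 2k-1 ∈ X ⊆ M_k.
   Conversely, a move m ∉ M_k would connect two positions of M_k, 2k-1 is the
   only move from 4k-2 ∉ M_k into M_k, and k is the only possible move out of
   the P-position k. *)

Definition P_labelling (X Q : nat -> Prop) : Prop :=
  forall x, Q x <-> (exists m, [/\ 1 <= m, m <= x & X m]) /\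
                    (forall m, 1 <= m -> m <= x -> X m -> ~ Q (x - m)).

Lemma Paux_fuel X f g x : x < f -> x < g -> (Paux X f x <-> Paux X g x).
Proof.
elim: f g x => [|f IH] [|g] x //= hf hg.
split=> -[hmove hno]; split=> // m m1 mx hm.
- by rewrite -(IH g); [exact: hno | lia | lia].
- by rewrite (IH g); [exact: hno | lia | lia].
Qed.

Lemma isP_labelling X : ~ X 0 -> P_labelling X (isP X).
Proof.
move=> X0 x.
have fuel m : 1 <= m -> m <= x -> Paux X x (x - m) <-> Paux X (x - m).+1 (x - m).
  by move=> m1 mx; apply: Paux_fuel; lia.
split.
- case=> _ [hmove hno]; split=> // m m1 mx hm [_].
  by rewrite -fuel //; exact: hno.
- case=> hmove hno; do 2!split=> //; move=> m m1 mx hm.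
  by rewrite fuel // => hP; exact: hno m m1 mx hm (conj X0 hP).
Qed.

Lemma P_labelling_unique X Q R :
  P_labelling X Q -> P_labelling X R -> forall x, Q x <-> R x.
Proof.
move=> HQ HR; elim/ltn_ind=> x IH; rewrite HQ HR.
split=> -[hmove hno]; split=> // m m1 mx hm.
- by rewrite -IH; [exact: hno | lia].
- by rewrite IH; [exact: hno | lia].
Qed.

Lemma isPE X Q : ~ X 0 -> (forall x, isP X x <-> Q x) <-> P_labelling X Q.
Proof.
move=> X0; split=> [E x | HQ]; last exact: P_labelling_unique (isP_labelling X0) HQ.
rewrite -E isP_labelling //.
split=> -[hmove hno]; split=> // m m1 mx hm.
- by rewrite -E; exact: hno.
- by rewrite E; exact: hno.
Qed.

Section MkGame.

Variable k : nat.
Hypothesis hk : 1 <= k.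

Local Notation p := (3 * k - 1).

Lemma MkP x : reflect (Mk k x) (k <= x %% p <= 2 * k - 1).
Proof.
apply: (iffP andP) => [[r_ge r_le] | [i [j [j_ge j_le ->]]]].
- by exists (x %/ p), (x %% p); split=> //; exact: divn_eq.
- by rewrite modnMDl modn_small; lia.
Qed.

Lemma Mk_ge x : Mk k x -> k <= x.
Proof. by case=> i [j [? ? ->]]; nia. Qed.

Lemma Mk_k : Mk k k.
Proof. by exists 0, k; split; lia. Qed.

Lemma Mk_subn x m : Mk k x -> Mk k m -> m <= x -> ~ Mk k (x - m).
Proof.
move=> /MkP hx [b [s [s_ge s_le Em]]] mx [c [t [t_ge t_le Ey]]].
have Ex : x = (b + c) * p + (s + t) by rewrite mulnDl; lia.
move: hx; rewrite Ex modnMDl.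
case: (ltnP (s + t) p) => hst; first by rewrite modn_small //; lia.
have -> : s + t = (s + t - p) + p by lia.
by rewrite modnDr modn_small; lia.
Qed.

Lemma Mk_move x : ~ Mk k x -> k <= x ->
  exists2 m, m = k \/ m = 2 * k - 1 & m <= x /\ Mk k (x - m).
Proof.
move=> /MkP hx kx.
have Ex := divn_eq x p; have rp : x %% p < p by rewrite ltn_mod; lia.
case: (ltnP (x %% p) k) => rk.
- case Eq: (x %/ p) Ex => [|q] Ex; first lia.
  exists (2 * k - 1); [by right | split; first lia].
  by exists q, (x %% p + k); split; rewrite ?mulSn in Ex; lia.
- exists k; [by left | split=> //].
  by exists (x %/ p), (x %% p - k); split; lia.
Qed.

Lemma Mk_between m : ~ Mk k m -> exists2 y, Mk k y & Mk k (y + m).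
Proof.
move=> /MkP hm.
have Em := divn_eq m p; have rp : m %% p < p by rewrite ltn_mod; lia.
case: (ltnP (m %% p) k) => rk.
- exists k; first exact: Mk_k.
  by exists (m %/ p), (m %% p + k); split; lia.
- exists (2 * k - 1); first by exists 0, (2 * k - 1); split; lia.
  by exists (m %/ p).+1, (m %% p - k); split; lia.
Qed.

Lemma Mk_4k : ~ Mk k (4 * k - 2).
Proof.
move=> /MkP; have -> : 4 * k - 2 = (k - 1) + p by lia.
by rewrite modnDr modn_small; lia.
Qed.

Lemma Mk_4k_subn m : Mk k m -> m <= 4 * k - 2 -> Mk k (4 * k - 2 - m) ->
  m = 2 * k - 1.
Proof.
move=> [[|b] [s [s_ge s_le ->]]] le4k /MkP; last by rewrite mulSn in le4k; lia.
by rewrite mul0n add0n in le4k *; rewrite modn_small; lia.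
Qed.

Lemma P_labelling_Mk X :
  X k -> X (2 * k - 1) -> (forall m, X m -> Mk k m) -> P_labelling X (Mk k).
Proof.
move=> Xk X2k XM x; split=> [Mx | [[m [m1 mx Xm]] hno]].
- split; first by exists k; split=> //; exact: (Mk_ge Mx).
  by move=> m m1 mx Xm; exact: (Mk_subn Mx (XM m Xm) mx).
- case: (MkP x) => // /Mk_move [|n n_eq [nx Mxn]].
    exact: leq_trans (Mk_ge (XM m Xm)) mx.
  have n1 : 1 <= n by case: n_eq => ->; lia.
  have Xn : X n by case: n_eq => ->.
  by case: (hno n n1 nx Xn Mxn).
Qed.

Lemma moves_of_P_labelling_Mk X : ~ X 0 -> P_labelling X (Mk k) ->
  [/\ X k, X (2 * k - 1) & forall m, X m -> Mk k m].
Proof.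
move=> X0 E.
have XM m : X m -> Mk k m.
  move=> Xm; case: (MkP m) => // /Mk_between [y My Mym].
  have m1 : 1 <= m by case: m Xm {Mym} => // /X0.
  case/E: Mym => _ /(_ m m1 (leq_addl y m) Xm).
  by rewrite addnK.
have Xk : X k.
  case/E: Mk_k => -[m [m1 mk Xm]] _.
  by have -> : k = m by have := Mk_ge (XM m Xm); lia.
split=> //; apply: NNPP => X2k; apply: Mk_4k; apply/E; split.
  by exists k; split=> //; lia.
by move=> m m1 mx Xm M4m; apply: X2k; rewrite -(Mk_4k_subn (XM m Xm) mx M4m).
Qed.

End MkGame.

Theorem theorem8 (k : nat) (hk : 1 <= k) (X : nat -> Prop) :
  (forall x, isP X x <-> Mk k x) <->
  [/\ X k, X (2 * k - 1) & forall x, X x -> Mk k x].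
Proof.
split=> [E | [Xk X2k XM]].
- have X0 : ~ X 0 by case/E: (Mk_k hk).
  exact/(moves_of_P_labelling_Mk hk X0)/(isPE _ X0).
- have X0 : ~ X 0 by move=> /XM /(Mk_ge hk); lia.
  exact/(isPE _ X0)/(P_labelling_Mk hk Xk X2k XM).
Qed.
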